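(* Let $t_f$ be the final time of an extremal of the planar minimum-fuel problem with final constraints on energy and angular momentum modulus. Use the angles of the context and suppose that at $t_f$: (i) $\vec r=r(\cos\varphi,\sin\varphi)$, $\vec v=v(-\sin(\varphi-\gamma),\cos(\varphi-\gamma))$ with $v\neq0$ and $\cos\gamma\neq0$; (ii) for some nonzero constant $c$, $\vec p_r=c\,\omega(-\cos(\theta-\varphi),\sin(\theta-\varphi))$ and $\vec p_v=c(\sin(\theta-\varphi),\cos(\theta-\varphi))$; (iii) $\omega\, r\, v\sin(\theta-\gamma)=v_c^2\sin\theta$ with $v_c=\sqrt{\mu/r}$; (iv) the final transversality relation $(\vec p_r^{\,t}\vec r+\vec p_v^{\,t}\vec v)(\vec r^{\,t}\vec v)=(\vec p_v^{\,t}\vec r)(v^2+v_c^2)$ holds. Then $(v_c^2+\omega^2r^2)\sin\theta(t_f)=0$, hence $\sin\theta(t_f)=0$. If moreover the closed-loop relation $\sin(\gamma-\theta)=\frac{v_c}{v}\frac{\sin\theta}{\sqrt{1-3\sin^2\theta}}$ holds at $t_f$ and $\theta,\gamma\in(-\pi/2,\pi/2)$, then $\theta(t_f)=\gamma(t_f)=0$: the final point is an apside (perigee or apogee) of the targeted elliptical orbit.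
   Context: Planar motion in an Earth-centered inertial frame $(O,x,y)$. $\varphi$ is the longitude of the position measured from the $x$ axis; $\theta$ is the pitch angle (thrust direction $\vec u$) and $\gamma$ the flight path angle (velocity direction), both measured positively from the local horizontal; $\omega$ is the angular rate of $\vec u$ in the inertial frame. $\vec p_r,\vec p_v$ are the costates of position and velocity; the form (ii) and relations (iii) and the closed-loop relation for $\theta$ are properties of optimal extremals established in prior work (with $\omega=\sqrt{\mu/r^3}\,(1-3\sin^2\theta)$ and $\dot\omega=-\frac{3\mu}{r^3}\sin\theta\cos\theta$) and are taken here as hypotheses. $\mu>0$ is the gravitational constant. *)

From Stdlib Require Import Reals Lra.
Open Scope R_scope.

Definition vec2 := (R * R)%type.
Definition dot (u w : vec2) : R := fst u * fst w + snd u * snd w.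

(* In the local frame of the final point every inner product in the
   transversality relation is a single trigonometric term, and the relation
   reduces to [v cos(gamma) (v sin(theta - gamma) + omega r sin(theta)) = 0]
   once (iii) is used.  Multiplying by [omega r] and using (iii) once more
   gives [(v_c^2 + omega^2 r^2) sin(theta) = 0]; the first factor is positive.
   With [sin theta = 0] the closed-loop relation forces [sin(gamma - theta) = 0],
   and both angles vanish on [(-pi/2, pi/2)]. *)

From Stdlib Require Import Reals Lra.
Open Scope R_scope.

Lemma dot_position_velocity r v phi gamma :
  dot (r * cos phi, r * sin phi) (v * - sin (phi - gamma), v * cos (phi - gamma))
  = r * v * sin gamma.
Proof.
  unfold dot; simpl.
  replace (sin gamma) with (sin (phi - (phi - gamma))) by (f_equal; ring).
  rewrite (sin_minus phi (phi - gamma)); ring.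
Qed.

Lemma dot_costate_position a r theta phi :
  dot (a * - cos (theta - phi), a * sin (theta - phi)) (r * cos phi, r * sin phi)
  = - (a * r) * cos theta.
Proof.
  unfold dot; simpl.
  replace (cos theta) with (cos (theta - phi + phi)) by (f_equal; ring).
  rewrite cos_plus; ring.
Qed.

Lemma dot_costate_velocity c v theta phi gamma :
  dot (c * sin (theta - phi), c * cos (theta - phi))
      (v * - sin (phi - gamma), v * cos (phi - gamma))
  = c * v * cos (theta - gamma).
Proof.
  unfold dot; simpl.
  replace (theta - gamma) with (theta - phi + (phi - gamma)) by ring.
  rewrite cos_plus; ring.
Qed.

Lemma dot_costate_velocity_position c r theta phi :
  dot (c * sin (theta - phi), c * cos (theta - phi)) (r * cos phi, r * sin phi)
  = c * r * sin theta.
Proof.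
  unfold dot; simpl.
  replace (sin theta) with (sin (theta - phi + phi)) by (f_equal; ring).
  rewrite sin_plus; ring.
Qed.

Lemma transversality_local_frame (r v phi gamma theta omega c K : R)
  (rv vv pr pv : vec2) :
  r <> 0 -> c <> 0 ->
  rv = (r * cos phi, r * sin phi) ->
  vv = (v * - sin (phi - gamma), v * cos (phi - gamma)) ->
  pr = (c * omega * - cos (theta - phi), c * omega * sin (theta - phi)) ->
  pv = (c * sin (theta - phi), c * cos (theta - phi)) ->
  (dot pr rv + dot pv vv) * dot rv vv = dot pv rv * (v ^ 2 + K) ->
  (v * cos (theta - gamma) - omega * r * cos theta) * (v * sin gamma)
  = sin theta * (v ^ 2 + K).
Proof.
  intros Hr Hc -> -> -> -> H.
  rewrite dot_costate_position, dot_costate_velocity, dot_position_velocity,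
    dot_costate_velocity_position in H.
  apply (Rmult_eq_reg_l (c * r)); [| now apply Rmult_integral_contrapositive].
  transitivity ((- (c * omega * r) * cos theta + c * v * cos (theta - gamma))
                 * (r * v * sin gamma)); [ring |].
  rewrite H; ring.
Qed.

Lemma transversality_flight_path_relation (v w K theta gamma : R) :
  v <> 0 -> cos gamma <> 0 ->
  w * v * sin (theta - gamma) = K * sin theta ->
  (v * cos (theta - gamma) - w * cos theta) * (v * sin gamma)
  = sin theta * (v ^ 2 + K) ->
  v * sin (theta - gamma) + w * sin theta = 0.
Proof.
  intros Hv Hcg H3 HT.
  set (s := sin (theta - gamma)) in *.
  set (k := cos (theta - gamma)) in *.
  assert (Hsin : sin theta = s * cos gamma + k * sin gamma).
  { unfold s, k; rewrite <- sin_plus; f_equal; ring. }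
  assert (Hcos : cos theta = k * cos gamma - s * sin gamma).
  { unfold s, k; rewrite <- cos_plus; f_equal; ring. }
  assert (Hpyth : sin gamma ^ 2 + cos gamma ^ 2 = 1).
  { pose proof (sin2_cos2 gamma); unfold Rsqr in *; lra. }
  (* (iii) and the Pythagorean identity turn the transversality defect into
     [- v cos(gamma)] times the claimed quantity. *)
  assert (Hfactor : v * cos gamma * (v * s + w * sin theta) = 0).
  { rewrite Hcos, Hsin in HT; rewrite Hsin in H3 |- *.
    transitivity
      (- ((v * k - w * (k * cos gamma - s * sin gamma)) * (v * sin gamma)
          - (s * cos gamma + k * sin gamma) * (v ^ 2 + K))
       + (w * v * s - K * (s * cos gamma + k * sin gamma))
       + w * v * s * (sin gamma ^ 2 + cos gamma ^ 2 - 1)).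
    - ring.
    - rewrite HT, H3, Hpyth; ring. }
  apply Rmult_integral in Hfactor as [H0 | H0]; [| exact H0].
  apply Rmult_integral in H0 as [H0 | H0]; contradiction.
Qed.

Lemma thrust_angle_factor (v w K theta gamma : R) :
  v * sin (theta - gamma) + w * sin theta = 0 ->
  w * v * sin (theta - gamma) = K * sin theta ->
  (K + w ^ 2) * sin theta = 0.
Proof.
  intros Hkey H3.
  transitivity (w * (v * sin (theta - gamma) + w * sin theta)
                - (w * v * sin (theta - gamma) - K * sin theta)); [ring |].
  rewrite Hkey, H3; ring.
Qed.

Lemma sin_eq0_centered x : - PI / 2 < x < PI / 2 -> sin x = 0 -> x = 0.
Proof.
  intros Hx Hs; apply sin_inj; try lra.
  now rewrite sin_0.
Qed.

Lemma apside_of_closed_loop (vc v theta gamma : R) :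
  sin theta = 0 ->
  sin (gamma - theta) = vc / v * (sin theta / sqrt (1 - 3 * sin theta ^ 2)) ->
  - PI / 2 < theta < PI / 2 -> - PI / 2 < gamma < PI / 2 ->
  theta = 0 /\ gamma = 0.
Proof.
  intros Hs Hloop Ht Hg.
  assert (Htheta : theta = 0) by now apply sin_eq0_centered.
  split; [exact Htheta |].
  apply sin_eq0_centered; [exact Hg |].
  rewrite Hs, Htheta, Rminus_0_r in Hloop.
  rewrite Hloop; unfold Rdiv; ring.
Qed.

Theorem mainTheorem5
  (mu r v phi gamma theta omega c : R)
  (rv vv pr pv : vec2)
  (Hmu : 0 < mu) (Hr : 0 < r)
  (Homega : omega = sqrt (mu / r ^ 3) * (1 - 3 * sin theta ^ 2))
  (Hrv : rv = (r * cos phi, r * sin phi))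
  (Hvv : vv = (v * - sin (phi - gamma), v * cos (phi - gamma)))
  (Hv : v <> 0) (Hcg : cos gamma <> 0)
  (Hc : c <> 0)
  (Hpr : pr = (c * omega * - cos (theta - phi), c * omega * sin (theta - phi)))
  (Hpv : pv = (c * sin (theta - phi), c * cos (theta - phi)))
  (H3 : omega * r * v * sin (theta - gamma) = (sqrt (mu / r)) ^ 2 * sin theta)
  (H4 : (dot pr rv + dot pv vv) * dot rv vv
        = dot pv rv * (v ^ 2 + (sqrt (mu / r)) ^ 2)) :
  ((sqrt (mu / r)) ^ 2 + omega ^ 2 * r ^ 2) * sin theta = 0 /\
  sin theta = 0 /\
  ((sin (gamma - theta)
      = sqrt (mu / r) / v * (sin theta / sqrt (1 - 3 * sin theta ^ 2)) ->
    - PI / 2 < theta < PI / 2 ->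
    - PI / 2 < gamma < PI / 2 ->
    theta = 0 /\ gamma = 0)).
Proof.
  set (K := sqrt (mu / r) ^ 2) in *.
  assert (HK : 0 < K).
  { assert (Hmur : 0 < mu / r) by (apply Rdiv_lt_0_compat; lra).
    unfold K; rewrite pow2_sqrt; lra. }
  assert (Hlocal := transversality_local_frame r v phi gamma theta omega c K
                      rv vv pr pv ltac:(lra) Hc Hrv Hvv Hpr Hpv H4).
  assert (Hkey := transversality_flight_path_relation v (omega * r) K theta gamma
                    Hv Hcg H3 Hlocal).
  assert (Hfactor : (K + omega ^ 2 * r ^ 2) * sin theta = 0).
  { rewrite <- Rpow_mult_distr; exact (thrust_angle_factor _ _ _ _ _ Hkey H3). }
  assert (Hsin : sin theta = 0).
  { apply Rmult_integral in Hfactor as [H0 | H0]; [| exact H0].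
    nra. }
  split; [exact Hfactor | split; [exact Hsin |]].
  now apply apside_of_closed_loop.
Qed.
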